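(* Suppose $\Sigma=\mathbb C_j$ and let $Z^{(-1)}(\alpha,z_0,z)$ and $\widehat Z^{(-1)}(\alpha,z_0,z)$ ($\alpha=1,j$) be Cauchy kernels in $\mathbb C_j$ of $\partial_{\overline z}W=aW+b\overline W$ and of $\partial_{\overline z}V=-aV-\overline b\,\overline V$ respectively, both behaving like $\mathcal O(|z|^{-1})$ as $z\to\infty$. Then $$\widehat Z^{(-1)}(1,z_0,z)=-\operatorname{Sc}Z^{(-1)}(1,z,z_0)+j\operatorname{Sc}Z^{(-1)}(j,z,z_0)$$ and $$\widehat Z^{(-1)}(j,z_0,z)=\operatorname{Vec}Z^{(-1)}(1,z,z_0)-j\operatorname{Vec}Z^{(-1)}(j,z,z_0).$$
   Context: Bicomplex numbers: $i,j$ imaginary units, $i^2=j^2=-1$, $ij=ji$; $\mathbb C_i=\{a+ib\}$, $\mathbb C_j=\{a+jb\}$ ($a,b$ real); $\mathbb B=\{u+jv:u,v\in\mathbb C_i\}$, $\operatorname{Sc}(u+jv)=u$, $\operatorname{Vec}(u+jv)=v$, $\overline{u+jv}=u-jv$. Plane $=\mathbb C_j$, $z=x+jy$, $\partial_{\overline z}=\frac12(\partial_x+j\partial_y)$. Norm on $\mathbb B$: writing $W^\pm=\operatorname{Sc}W\mp i\operatorname{Vec}W\in\mathbb C_i$, $|W|=\frac12(|W^+|+|W^-|)$. $Z=\mathcal O(|z|^{-1})$ as $z\to\infty$ means $|z|\,|Z(z)|$ is bounded for large $|z|$. Setting: $a,b$ are $\mathbb B$-valued Hölder continuous functions on $\mathbb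 C_j$; solutions of Vekua equations are $\mathbb B$-valued functions with continuous first partials satisfying the equation. A Cauchy kernel in $\Sigma$ of a Vekua equation is a family $Z^{(-1)}(1,z_0,z)$, $Z^{(-1)}(j,z_0,z)$, $z_0\in\Sigma$, both solutions in $z\in\Sigma\setminus\{z_0\}$, with $\lim_{z\to z_0}(z-z_0)Z^{(-1)}(\alpha,z_0,z)=\alpha$, $\alpha=1,j$. *)

From Stdlib Require Import Reals.
From Coquelicot Require Import Coquelicot.

Open Scope R_scope.

(* W = u + j v with u, v in C_i (Coquelicot's C, with imaginary unit i = Ci). *)
Record B := mkB { Sc : C ; Vec : C }.

Definition Badd (W V : B) : B := mkB (Cplus (Sc W) (Sc V)) (Cplus (Vec W) (Vec V)).
Definition Bopp (W : B) : B := mkB (Copp (Sc W)) (Copp (Vec W)).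
Definition Bsub (W V : B) : B := Badd W (Bopp V).
(* (u + j v)(u' + j v') = (u u' - v v') + j (u v' + v u')   since j^2 = -1, ij = ji *)
Definition Bmul (W V : B) : B :=
  mkB (Cminus (Cmult (Sc W) (Sc V)) (Cmult (Vec W) (Vec V)))
      (Cplus (Cmult (Sc W) (Vec V)) (Cmult (Vec W) (Sc V))).
Definition Bconj (W : B) : B := mkB (Sc W) (Copp (Vec W)).
Definition B1 : B := mkB (RtoC 1) (RtoC 0).
Definition Bj : B := mkB (RtoC 0) (RtoC 1).
Definition Bscal (r : R) (W : B) : B := mkB (Cmult (RtoC r) (Sc W)) (Cmult (RtoC r) (Vec W)).

Definition Bnorm (W : B) : R :=
  (Cmod (Cminus (Sc W) (Cmult Ci (Vec W))) + Cmod (Cplus (Sc W) (Cmult Ci (Vec W)))) / 2.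

(* A point z = x + j y of C_j is represented by the pair (x, y). *)
Definition Pt := (R * R)%type.
Definition toB (z : Pt) : B := mkB (RtoC (fst z)) (RtoC (snd z)).
Definition absj (z : Pt) : R := sqrt (fst z ^ 2 + snd z ^ 2).
Definition distj (z w : Pt) : R := absj (fst z - fst w, snd z - snd w).

Definition c1 (W : B) : R := fst (Sc W).
Definition c2 (W : B) : R := snd (Sc W).
Definition c3 (W : B) : R := fst (Vec W).
Definition c4 (W : B) : R := snd (Vec W).
Definition coords : list (B -> R) := c1 :: c2 :: c3 :: c4 :: nil.
Definition mkB4 (r1 r2 r3 r4 : R) : B := mkB (r1, r2) (r3, r4).

Definition dx (g : Pt -> R) (p : Pt) : R := Derive (fun t => g (t, snd p)) (fst p).
Definition dy (g : Pt -> R) (p : Pt) : R := Derive (fun t => g (fst p, t)) (snd p).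

Definition dxB (W : Pt -> B) (p : Pt) : B :=
  mkB4 (dx (fun q => c1 (W q)) p) (dx (fun q => c2 (W q)) p)
       (dx (fun q => c3 (W q)) p) (dx (fun q => c4 (W q)) p).
Definition dyB (W : Pt -> B) (p : Pt) : B :=
  mkB4 (dy (fun q => c1 (W q)) p) (dy (fun q => c2 (W q)) p)
       (dy (fun q => c3 (W q)) p) (dy (fun q => c4 (W q)) p).

Definition dzbar (W : Pt -> B) (p : Pt) : B :=
  Bscal (/ 2) (Badd (dxB W p) (Bmul Bj (dyB W p))).

Definition C1_on (U : Pt -> Prop) (W : Pt -> B) : Prop :=
  forall p, U p ->
  forall c, List.In c coords ->
    ex_derive (fun t => c (W (t, snd p))) (fst p) /\
    ex_derive (fun t => c (W (fst p, t))) (snd p) /\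
    continuous (dx (fun q => c (W q))) p /\
    continuous (dy (fun q => c (W q))) p.

Definition vekua_solution (a b : Pt -> B) (U : Pt -> Prop) (W : Pt -> B) : Prop :=
  C1_on U W /\
  forall p, U p -> dzbar W p = Badd (Bmul (a p) (W p)) (Bmul (b p) (Bconj (W p))).

Definition holder_continuous (f : Pt -> B) : Prop :=
  forall (c : Pt) (r : R), 0 < r ->
  exists alpha K : R, 0 < alpha <= 1 /\ 0 <= K /\
    forall z w, distj z c < r -> distj w c < r ->
      Bnorm (Bsub (f z) (f w)) <= K * Rpower (distj z w) alpha.

Definition Blim_at (F : Pt -> B) (z0 : Pt) (L : B) : Prop :=
  forall eps, 0 < eps -> exists delta, 0 < delta /\
    forall z, z <> z0 -> distj z z0 < delta -> Bnorm (Bsub (F z) L) < eps.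

(* Cauchy kernel in Sigma = C_j: Z1 z0 z = Z^{(-1)}(1,z0,z), Zj z0 z = Z^{(-1)}(j,z0,z) *)
Definition cauchy_kernel (a b : Pt -> B) (Z1 Zj : Pt -> Pt -> B) : Prop :=
  forall z0 : Pt,
    vekua_solution a b (fun z => z <> z0) (Z1 z0) /\
    vekua_solution a b (fun z => z <> z0) (Zj z0) /\
    Blim_at (fun z => Bmul (Bsub (toB z) (toB z0)) (Z1 z0 z)) z0 B1 /\
    Blim_at (fun z => Bmul (Bsub (toB z) (toB z0)) (Zj z0 z)) z0 Bj.

Definition bigO_inv (Z : Pt -> B) : Prop :=
  exists M R0 : R, forall z, R0 < absj z -> absj z * Bnorm (Z z) <= M.

Definition kernel_decay (Z1 Zj : Pt -> Pt -> B) : Prop :=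
  forall z0, bigO_inv (Z1 z0) /\ bigO_inv (Zj z0).

From Stdlib Require Import Reals Lra FunctionalExtensionality.
From Coquelicot Require Import Coquelicot.
Open Scope R_scope.

(* If [W] solves [d_zbar W = a W + b conj W] and [V] solves the adjoint equation
   [d_zbar V = - a V - conj b conj V], then [Sc (d_zbar (W V)) = 0]: the real forms
   [c3 (W V) dx + c1 (W V) dy] and [c4 (W V) dx + c2 (W V) dy] are closed.  Take for [W] a
   kernel of the first equation with pole [z] and residue [alpha], and for [V] a kernel of the
   adjoint equation with pole [z0] and residue [beta].  By Green's theorem the circulation of
   these forms around a large square is [2 pi] times the sum of their residues, the coordinates
   of [Sc (W(z0) beta + alpha V(z))]; since [W V = O(|z|^-2)] the circulation tends to [0].
   The four choices [alpha, beta] in [{1, j}] give four linear relations which determine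
   [Zh(1, z0, z)] and [Zh(j, z0, z)]. *)

Lemma locally_Pt_iff (p : Pt) (P : Pt -> Prop) :
  locally p P <-> exists r, 0 < r /\
    forall x y, Rabs (x - fst p) < r -> Rabs (y - snd p) < r -> P (x, y).
Proof.
  split.
  - intros [e He]. exists e. split; [apply cond_pos|]. intros x y Hx Hy.
    apply He. destruct p as [px py]. split; assumption.
  - intros [r [Hr H]]. exists (mkposreal r Hr). intros [x y] [Hx Hy]. apply H; assumption.
Qed.

Lemma continuous_Pt_iff (g : Pt -> R) (p : Pt) :
  continuous g p <-> forall eps, 0 < eps -> exists r, 0 < r /\ forall x y,
    Rabs (x - fst p) < r -> Rabs (y - snd p) < r -> Rabs (g (x, y) - g p) < eps.
Proof.
  unfold continuous. rewrite filterlim_locally. split.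
  - intros H eps He.
    destruct (proj1 (locally_Pt_iff _ _) (H (mkposreal eps He))) as [r [Hr Hr']].
    exists r; split; auto.
  - intros H eps. apply locally_Pt_iff. destruct (H eps (cond_pos eps)) as [r [Hr Hr']].
    exists r; split; auto.
Qed.

Lemma continuous_Pt_fst (g : Pt -> R) x y :
  continuous g (x, y) -> continuous (fun t => g (t, y)) x.
Proof.
  intros Hg. apply filterlim_locally. intros eps.
  destruct (proj1 (continuous_Pt_iff g _) Hg eps (cond_pos eps)) as [r [Hr H]].
  exists (mkposreal r Hr). intros t Ht. apply (H t y); simpl; [exact Ht|].
  rewrite Rminus_diag, Rabs_R0; exact Hr.
Qed.

Lemma continuous_Pt_snd (g : Pt -> R) x y :
  continuous g (x, y) -> continuous (fun t => g (x, t)) y.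
Proof.
  intros Hg. apply filterlim_locally. intros eps.
  destruct (proj1 (continuous_Pt_iff g _) Hg eps (cond_pos eps)) as [r [Hr H]].
  exists (mkposreal r Hr). intros t Ht. apply (H x t); simpl; [|exact Ht].
  rewrite Rminus_diag, Rabs_R0; exact Hr.
Qed.

Lemma continuity_2d_pt_swap (g : Pt -> R) s t :
  continuous g (t, s) -> continuity_2d_pt (fun u v => g (v, u)) s t.
Proof.
  intros Hg eps. destruct (proj1 (continuous_Pt_iff g _) Hg eps (cond_pos eps)) as [r [Hr H]].
  exists (mkposreal r Hr). intros u v Hu Hv. apply (H v u); assumption.
Qed.

Lemma Rabs_sub_le_between a b t :
  Rmin a b <= t <= Rmax a b -> Rabs (t - a) <= Rabs (b - a).
Proof.
  unfold Rmin, Rmax. intros Ht. destruct (Rle_dec a b).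
  - rewrite (Rabs_pos_eq (b - a)) by lra.
    destruct (Rle_dec 0 (t - a)); [rewrite Rabs_pos_eq| rewrite Rabs_left1]; lra.
  - rewrite (Rabs_left1 (b - a)) by lra.
    destruct (Rle_dec 0 (t - a)); [rewrite Rabs_pos_eq| rewrite Rabs_left1]; lra.
Qed.

Lemma ex_derive_continuity_pt (f : R -> R) x : ex_derive f x -> continuity_pt f x.
Proof. intros H. apply ex_derive_continuous in H. apply continuity_pt_filterlim, H. Qed.

Definition ex_partials (g : Pt -> R) (q : Pt) : Prop :=
  ex_derive (fun t => g (t, snd q)) (fst q) /\ ex_derive (fun t => g (fst q, t)) (snd q).

Definition C1_at (g : Pt -> R) (p : Pt) : Prop :=
  locally p (ex_partials g) /\ continuous (dx g) p /\ continuous (dy g) p.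

Lemma C1_at_ex_partials g p : C1_at g p -> ex_partials g p.
Proof. intros [[e He] _]. apply He, ball_center. Qed.

Lemma C1_at_increment_fst (g : Pt -> R) x0 y0 : C1_at g (x0, y0) ->
  exists r M, 0 < r /\ 0 <= M /\ forall x y, Rabs (x - x0) < r -> Rabs (y - y0) < r ->
    Rabs (g (x, y) - g (x0, y)) <= M * Rabs (x - x0).
Proof.
  intros [Hl [Hdx _]].
  destruct (proj1 (locally_Pt_iff _ _) Hl) as [r1 [Hr1 H1]].
  destruct (proj1 (continuous_Pt_iff _ _) Hdx 1 Rlt_0_1) as [r2 [Hr2 H2]].
  exists (Rmin r1 r2), (Rabs (dx g (x0, y0)) + 1).
  split; [apply Rmin_pos; lra|]. split; [pose proof (Rabs_pos (dx g (x0, y0))); lra|].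
  intros x y Hx Hy. pose proof (Rmin_l r1 r2). pose proof (Rmin_r r1 r2).
  assert (Hseg : forall t, Rmin x0 x <= t <= Rmax x0 x -> Rabs (t - x0) < Rmin r1 r2).
  { intros t Ht. pose proof (Rabs_sub_le_between x0 x t Ht). lra. }
  assert (Hpd : forall t, Rmin x0 x <= t <= Rmax x0 x ->
                  ex_derive (fun u => g (u, y)) t).
  { intros t Ht. refine (proj1 (H1 t y _ _)); simpl; [pose proof (Hseg t Ht)|]; lra. }
  destruct (MVT_gen (fun t => g (t, y)) x0 x (fun t => dx g (t, y))) as [c [Hc ->]].
  - intros t Ht. apply Derive_correct, Hpd. lra.
  - intros t Ht. apply ex_derive_continuity_pt, Hpd, Ht.
  - rewrite Rabs_mult. apply Rmult_le_compat_r; [apply Rabs_pos|].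
    assert (Hc1 : Rabs (dx g (c, y) - dx g (x0, y0)) < 1).
    { apply H2; simpl; [pose proof (Hseg c Hc)|]; lra. }
    pose proof (Rabs_triang_inv (dx g (c, y)) (dx g (x0, y0))). lra.
Qed.

Lemma C1_at_continuous g p : C1_at g p -> continuous g p.
Proof.
  destruct p as [x0 y0]. intros Hg.
  destruct (C1_at_increment_fst g x0 y0 Hg) as [r1 [M [Hr1 [HM Hinc]]]].
  destruct (C1_at_ex_partials g _ Hg) as [_ Hy0]. simpl in Hy0.
  apply ex_derive_continuous in Hy0. unfold continuous in Hy0.
  rewrite filterlim_locally in Hy0.
  apply continuous_Pt_iff. intros eps He.
  destruct (Hy0 (mkposreal (eps / 2) ltac:(lra))) as [r2 H2].
  set (M' := M + 1).
  assert (HM' : M < M') by (unfold M'; lra).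
  pose proof (Rmin_l r1 (Rmin r2 (eps / (2 * M')))).
  pose proof (Rmin_r r1 (Rmin r2 (eps / (2 * M')))).
  pose proof (Rmin_l r2 (eps / (2 * M'))). pose proof (Rmin_r r2 (eps / (2 * M'))).
  set (r := Rmin r1 (Rmin r2 (eps / (2 * M')))) in *.
  assert (Hr : 0 < r).
  { repeat apply Rmin_pos; try lra; try apply cond_pos. apply Rdiv_lt_0_compat; lra. }
  exists r. split; [exact Hr|]. intros x y Hx Hy. simpl in Hx, Hy.
  assert (Hfst : Rabs (g (x, y) - g (x0, y)) <= M' * (eps / (2 * M'))).
  { eapply Rle_trans; [apply Hinc; lra|].
    apply Rmult_le_compat; try apply Rabs_pos; lra. }
  assert (Hsnd : Rabs (g (x0, y) - g (x0, y0)) < eps / 2).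
  { apply (H2 y). change (Rabs (y - y0) < r2). lra. }
  replace (M' * (eps / (2 * M'))) with (eps / 2) in Hfst by (field; lra).
  replace (g (x, y) - g (x0, y0)) with ((g (x, y) - g (x0, y)) + (g (x0, y) - g (x0, y0))) by ring.
  eapply Rle_lt_trans; [apply Rabs_triang|lra].
Qed.

Section PartialsAlgebra.
Variables (f g : Pt -> R) (q : Pt).
Hypotheses (Hf : ex_partials f q) (Hg : ex_partials g q).

Lemma ex_partials_plus : ex_partials (fun z => f z + g z) q.
Proof. destruct Hf, Hg. split; apply (ex_derive_plus (K:=R_AbsRing) (V:=R_NormedModule)); auto. Qed.
Lemma ex_partials_minus : ex_partials (fun z => f z - g z) q.
Proof. destruct Hf, Hg. split; apply (ex_derive_minus (K:=R_AbsRing) (V:=R_NormedModule)); auto. Qed.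
Lemma ex_partials_mult : ex_partials (fun z => f z * g z) q.
Proof. destruct Hf, Hg. split; apply ex_derive_mult; auto. Qed.

Lemma dx_plus : dx (fun z => f z + g z) q = dx f q + dx g q.
Proof. destruct Hf, Hg. apply Derive_plus; auto. Qed.
Lemma dy_plus : dy (fun z => f z + g z) q = dy f q + dy g q.
Proof. destruct Hf, Hg. apply Derive_plus; auto. Qed.
Lemma dx_minus : dx (fun z => f z - g z) q = dx f q - dx g q.
Proof. destruct Hf, Hg. apply Derive_minus; auto. Qed.
Lemma dy_minus : dy (fun z => f z - g z) q = dy f q - dy g q.
Proof. destruct Hf, Hg. apply Derive_minus; auto. Qed.
Lemma dx_mult : dx (fun z => f z * g z) q = dx f q * g q + f q * dx g q.
Proof. destruct Hf, Hg. unfold dx. rewrite Derive_mult; auto. destruct q; reflexivity. Qed.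
Lemma dy_mult : dy (fun z => f z * g z) q = dy f q * g q + f q * dy g q.
Proof. destruct Hf, Hg. unfold dy. rewrite Derive_mult; auto. destruct q; reflexivity. Qed.

End PartialsAlgebra.

Lemma dx_ext f g q : (forall z, f z = g z) -> dx f q = dx g q.
Proof. intros H. apply Derive_ext. intros; apply H. Qed.
Lemma dy_ext f g q : (forall z, f z = g z) -> dy f q = dy g q.
Proof. intros H. apply Derive_ext. intros; apply H. Qed.

Section C1Algebra.
Variables (f g : Pt -> R) (p : Pt).
Hypotheses (Hf : C1_at f p) (Hg : C1_at g p).

Let both_partials : locally p (fun q => ex_partials f q /\ ex_partials g q).
Proof. apply filter_and; [apply Hf | apply Hg]. Qed.

Lemma C1_at_plus : C1_at (fun z => f z + g z) p.
Proof.
  destruct Hf as [_ [xf yf]], Hg as [_ [xg yg]]. split; [|split].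
  - apply (filter_imp _ _ (fun q H => ex_partials_plus f g q (proj1 H) (proj2 H)) both_partials).
  - apply (continuous_ext_loc _ (fun q => dx f q + dx g q)).
    + apply (filter_imp _ _ (fun q H => eq_sym (dx_plus f g q (proj1 H) (proj2 H))) both_partials).
    + apply (continuous_plus (V:=R_NormedModule)); auto.
  - apply (continuous_ext_loc _ (fun q => dy f q + dy g q)).
    + apply (filter_imp _ _ (fun q H => eq_sym (dy_plus f g q (proj1 H) (proj2 H))) both_partials).
    + apply (continuous_plus (V:=R_NormedModule)); auto.
Qed.

Lemma C1_at_minus : C1_at (fun z => f z - g z) p.
Proof.
  destruct Hf as [_ [xf yf]], Hg as [_ [xg yg]]. split; [|split].
  - apply (filter_imp _ _ (fun q H => ex_partials_minus f g q (proj1 H) (proj2 H)) both_partials).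
  - apply (continuous_ext_loc _ (fun q => dx f q - dx g q)).
    + apply (filter_imp _ _ (fun q H => eq_sym (dx_minus f g q (proj1 H) (proj2 H))) both_partials).
    + apply (continuous_minus (V:=R_NormedModule)); auto.
  - apply (continuous_ext_loc _ (fun q => dy f q - dy g q)).
    + apply (filter_imp _ _ (fun q H => eq_sym (dy_minus f g q (proj1 H) (proj2 H))) both_partials).
    + apply (continuous_minus (V:=R_NormedModule)); auto.
Qed.

Lemma C1_at_mult : C1_at (fun z => f z * g z) p.
Proof.
  pose proof (C1_at_continuous f p Hf) as cf. pose proof (C1_at_continuous g p Hg) as cg.
  destruct Hf as [_ [xf yf]], Hg as [_ [xg yg]]. split; [|split].
  - apply (filter_imp _ _ (fun q H => ex_partials_mult f g q (proj1 H) (proj2 H)) both_partials).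
  - apply (continuous_ext_loc _ (fun q => dx f q * g q + f q * dx g q)).
    + apply (filter_imp _ _ (fun q H => eq_sym (dx_mult f g q (proj1 H) (proj2 H))) both_partials).
    + apply (continuous_plus (V:=R_NormedModule));
        apply (continuous_mult (K:=R_AbsRing)); auto.
  - apply (continuous_ext_loc _ (fun q => dy f q * g q + f q * dy g q)).
    + apply (filter_imp _ _ (fun q H => eq_sym (dy_mult f g q (proj1 H) (proj2 H))) both_partials).
    + apply (continuous_plus (V:=R_NormedModule));
        apply (continuous_mult (K:=R_AbsRing)); auto.
Qed.

End C1Algebra.

Definition int_x (P : Pt -> R) (y a b : R) : R := RInt (fun x => P (x, y)) a b.
Definition int_y (Q : Pt -> R) (x c d : R) : R := RInt (fun y => Q (x, y)) c d.

Definition circulation (P Q : Pt -> R) (a b c d : R) : R :=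
  int_x P c a b + int_y Q b c d - int_x P d a b - int_y Q a c d.

Definition closed_at (P Q : Pt -> R) (z : Pt) : Prop :=
  C1_at P z /\ C1_at Q z /\ dy P z = dx Q z.

Lemma ex_RInt_fst (P : Pt -> R) y a b :
  (forall t, Rmin a b <= t <= Rmax a b -> continuous P (t, y)) ->
  ex_RInt (fun x => P (x, y)) a b.
Proof.
  intros H. apply (ex_RInt_continuous (V:=R_CompleteNormedModule)).
  intros t Ht. apply continuous_Pt_fst, H, Ht.
Qed.

Lemma ex_RInt_snd (Q : Pt -> R) x c d :
  (forall t, Rmin c d <= t <= Rmax c d -> continuous Q (x, t)) ->
  ex_RInt (fun y => Q (x, y)) c d.
Proof.
  intros H. apply (ex_RInt_continuous (V:=R_CompleteNormedModule)).
  intros t Ht. apply continuous_Pt_snd, H, Ht.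
Qed.

Lemma between_in_open lo hi a b t :
  lo < a < hi -> lo < b < hi -> Rmin a b <= t <= Rmax a b -> lo < t < hi.
Proof. unfold Rmin, Rmax; destruct (Rle_dec a b); lra. Qed.

Lemma locally_in_open lo hi s : lo < s < hi -> locally s (fun u => lo < u < hi).
Proof.
  intros Hs. assert (Hr : 0 < Rmin (s - lo) (hi - s)) by (apply Rmin_pos; lra).
  exists (mkposreal _ Hr). intros u Hu. change (Rabs (u - s) < Rmin (s - lo) (hi - s)) in Hu.
  pose proof (Rmin_l (s - lo) (hi - s)). pose proof (Rmin_r (s - lo) (hi - s)).
  apply Rabs_def2 in Hu. lra.
Qed.

Lemma is_derive_zero_const (G : R -> R) lo hi c d : lo < c <= d -> d < hi ->
  (forall s, lo < s < hi -> is_derive G s 0) -> G d = G c.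
Proof.
  intros Hc Hd H.
  assert (Hin : forall x, Rmin c d <= x <= Rmax c d -> lo < x < hi)
    by (intros x; apply between_in_open; lra).
  destruct (MVT_gen G c d (fun _ => 0)) as [e [_ He]].
  - intros x Hx. apply H, Hin. lra.
  - intros x Hx. apply ex_derive_continuity_pt. exists 0. apply H, Hin, Hx.
  - lra.
Qed.

Lemma is_derive_int_y (Q : Pt -> R) x c s lo hi : lo < c < hi -> lo < s < hi ->
  (forall y, lo < y < hi -> continuous Q (x, y)) ->
  is_derive (fun u => int_y Q x c u) s (Q (x, s)).
Proof.
  intros Hc Hs HQ. apply (is_derive_RInt (fun y => Q (x, y)) _ c s).
  - apply (filter_imp (fun u => lo < u < hi)); [|apply (locally_in_open lo hi s Hs)].
    intros u Hu.
    apply (RInt_correct (V:=R_CompleteNormedModule)), ex_RInt_snd.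
    intros t Ht. apply HQ, (between_in_open lo hi c u); auto.
  - apply continuous_Pt_snd, HQ, Hs.
Qed.

(* Differentiation under the integral sign, then [dy P = dx Q] and the fundamental theorem of calculus. *)
Lemma is_derive_int_x (P Q : Pt -> R) a b s lo hi : lo < s < hi ->
  (forall x y, Rmin a b <= x <= Rmax a b -> lo < y < hi -> closed_at P Q (x, y)) ->
  is_derive (fun u => int_x P u a b) s (Q (b, s) - Q (a, s)).
Proof.
  intros Hs HPQ.
  assert (Hnear := locally_in_open lo hi s Hs).
  replace (Q (b, s) - Q (a, s)) with (RInt (fun t => Derive (fun u => P (t, u)) s) a b).
  2:{ rewrite (RInt_ext _ (fun t => Derive (fun u => Q (u, s)) t)).
      - apply RInt_Derive; intros t Ht; destruct (HPQ t s Ht Hs) as [_ [HQ _]].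
        + apply (C1_at_ex_partials _ _ HQ).
        + apply (continuous_Pt_fst (dx Q) t s), HQ.
      - intros t Ht. apply (HPQ t s); [lra | exact Hs]. }
  apply (is_derive_RInt_param (fun u t => P (t, u)) a b s).
  - apply (filter_imp (fun u => lo < u < hi)); [|exact Hnear]. intros u Hu t Ht.
    apply (C1_at_ex_partials _ _ (proj1 (HPQ t u Ht Hu))).
  - intros t Ht. apply (continuity_2d_pt_swap (dy P) s t), (HPQ t s Ht Hs).
  - apply (filter_imp (fun u => lo < u < hi)); [|exact Hnear]. intros u Hu. apply ex_RInt_fst.
    intros t Ht. apply C1_at_continuous, (HPQ t u Ht Hu).
Qed.

(* Green's theorem: the circulation around [[a,b] x [c,s]] has zero derivative in [s]. *)
Theorem circulation_closed (P Q : Pt -> R) a b c d delta : a <= b -> c <= d -> 0 < delta ->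
  (forall x y, a - delta < x < b + delta -> c - delta < y < d + delta -> closed_at P Q (x, y)) ->
  circulation P Q a b c d = 0.
Proof.
  intros Hab Hcd Hd HPQ.
  assert (Hside : forall x, (x = a \/ x = b) -> forall y, c - delta < y < d + delta ->
                    continuous Q (x, y)).
  { intros x Hx y Hy. apply C1_at_continuous, HPQ; [destruct Hx; subst|]; lra. }
  assert (HD : forall s, c - delta < s < d + delta -> is_derive (circulation P Q a b c) s 0).
  { intros s Hs. unfold circulation.
    replace 0 with (0 + Q (b, s) - (Q (b, s) - Q (a, s)) - Q (a, s)) by ring.
    apply (is_derive_minus (V:=R_NormedModule)); [apply (is_derive_minus (V:=R_NormedModule))|].
    - apply (is_derive_plus (V:=R_NormedModule)); [apply (is_derive_const (V:=R_NormedModule))|].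
      apply (is_derive_int_y _ _ _ _ (c - delta) (d + delta)); auto; lra.
    - apply (is_derive_int_x _ _ _ _ _ (c - delta) (d + delta)); auto.
      intros x y Hx Hy. apply HPQ; auto. unfold Rmin, Rmax in Hx; destruct (Rle_dec a b); lra.
    - apply (is_derive_int_y _ _ _ _ (c - delta) (d + delta)); auto; lra. }
  rewrite (is_derive_zero_const _ (c - delta) (d + delta) c d) by (auto; lra).
  unfold circulation, int_y. rewrite !RInt_point. unfold zero; simpl. ring.
Qed.

Lemma circulation_split_x (P Q : Pt -> R) a m b c d :
  ex_RInt (fun x => P (x, c)) a m -> ex_RInt (fun x => P (x, c)) m b ->
  ex_RInt (fun x => P (x, d)) a m -> ex_RInt (fun x => P (x, d)) m b ->
  circulation P Q a b c d = circulation P Q a m c d + circulation P Q m b c d.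
Proof.
  intros. unfold circulation, int_x.
  rewrite <- (RInt_Chasles (fun x => P (x, c)) a m b),
          <- (RInt_Chasles (fun x => P (x, d)) a m b) by assumption.
  unfold plus; simpl. ring.
Qed.

Lemma circulation_split_y (P Q : Pt -> R) a b c m d :
  ex_RInt (fun y => Q (a, y)) c m -> ex_RInt (fun y => Q (a, y)) m d ->
  ex_RInt (fun y => Q (b, y)) c m -> ex_RInt (fun y => Q (b, y)) m d ->
  circulation P Q a b c d = circulation P Q a b c m + circulation P Q a b m d.
Proof.
  intros. unfold circulation, int_y.
  rewrite <- (RInt_Chasles (fun y => Q (a, y)) c m d),
          <- (RInt_Chasles (fun y => Q (b, y)) c m d) by assumption.
  unfold plus; simpl. ring.
Qed.

(* Cut the rectangle into the small square and four pole-free rectangles. *)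
Lemma circulation_excise (P Q : Pt -> R) a b c d p q e delta :
  0 < delta -> 0 < e -> a < p - e -> p + e < b -> c < q - e -> q + e < d ->
  (forall x y, a - delta < x < b + delta -> c - delta < y < d + delta -> (x, y) <> (p, q) ->
     closed_at P Q (x, y)) ->
  circulation P Q a b c d = circulation P Q (p - e) (p + e) (q - e) (q + e).
Proof.
  intros Hd He H1 H2 H3 H4 HPQ.
  set (dl := Rmin delta (e / 2)).
  assert (Hdl : 0 < dl) by (apply Rmin_pos; lra).
  assert (Hdl1 : dl <= delta) by apply Rmin_l. assert (Hdl2 : dl <= e / 2) by apply Rmin_r.
  assert (Hcont : forall x y, a <= x <= b -> c <= y <= d ->
                    (x = p - e \/ x = p + e \/ y = c \/ y = d) ->
                    continuous P (x, y) /\ continuous Q (x, y)).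
  { intros x y Hx Hy Hxy. destruct (HPQ x y) as [HP [HQ _]]; try lra.
    - intros E; injection E as -> ->; lra.
    - split; apply C1_at_continuous; assumption. }
  assert (Hx : forall y x0 x1, (y = c \/ y = d) -> a <= x0 <= b -> a <= x1 <= b ->
                 ex_RInt (fun x => P (x, y)) x0 x1).
  { intros y x0 x1 Hy Hx0 Hx1. apply ex_RInt_fst. intros t Ht.
    apply Hcont; try (unfold Rmin, Rmax in Ht; destruct (Rle_dec x0 x1)); lra. }
  assert (Hy : forall x y0 y1, (x = p - e \/ x = p + e) -> c <= y0 <= d -> c <= y1 <= d ->
                 ex_RInt (fun y => Q (x, y)) y0 y1).
  { intros x y0 y1 Hx0 Hy0 Hy1. apply ex_RInt_snd. intros t Ht.
    apply Hcont; try (unfold Rmin, Rmax in Ht; destruct (Rle_dec y0 y1)); lra. }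
  assert (Hfree : forall a' b' c' d', a <= a' <= b' -> b' <= b -> c <= c' <= d' -> d' <= d ->
                    (b' <= p - e \/ p + e <= a' \/ d' <= q - e \/ q + e <= c') ->
                    circulation P Q a' b' c' d' = 0).
  { intros a' b' c' d' Ha Hb Hc Hd' Hout. apply (circulation_closed _ _ _ _ _ _ dl); try lra.
    intros x y Hx' Hy'. apply HPQ; try lra. intros E; injection E as -> ->; lra. }
  rewrite (circulation_split_x _ _ a (p - e) b), (circulation_split_x _ _ (p - e) (p + e) b)
    by (apply Hx; lra).
  rewrite (circulation_split_y _ _ (p - e) (p + e) c (q - e) d),
          (circulation_split_y _ _ (p - e) (p + e) (q - e) (q + e) d) by (apply Hy; lra).
  rewrite (Hfree a (p - e) c d), (Hfree (p + e) b c d), (Hfree (p - e) (p + e) c (q - e)),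
    (Hfree (p - e) (p + e) (q + e) d) by lra.
  ring.
Qed.

Definition punctured (z0 : Pt) : (Pt -> Prop) -> Prop := within (fun z => z <> z0) (locally z0).

Global Instance punctured_filter z0 : Filter (punctured z0).
Proof. apply within_filter, locally_filter. Qed.

Lemma punctured_box (p q : R) (P : Pt -> Prop) : punctured (p, q) P ->
  exists r, 0 < r /\ forall x y, (x, y) <> (p, q) -> Rabs (x - p) < r -> Rabs (y - q) < r -> P (x, y).
Proof.
  intros H. destruct (proj1 (locally_Pt_iff _ _) H) as [r [Hr Hbox]].
  exists r. split; [exact Hr|]. intros x y Hne Hx Hy. apply (Hbox x y Hx Hy Hne).
Qed.

(* [Q + j P = (f1 + j f3) / (z - z0)] with [z0 = p + j q]. *)
Definition pole_form (P Q f1 f3 : Pt -> R) (p q : R) : Prop :=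
  forall x y, (x, y) <> (p, q) ->
    P (x, y) = ((x - p) * f3 (x, y) - (y - q) * f1 (x, y)) / ((x - p) ^ 2 + (y - q) ^ 2) /\
    Q (x, y) = ((x - p) * f1 (x, y) + (y - q) * f3 (x, y)) / ((x - p) ^ 2 + (y - q) ^ 2).

Lemma is_RInt_edge_kernel A B c e : 0 < e ->
  is_RInt (fun t => (A * (t - c) + B * e) / ((t - c) ^ 2 + e ^ 2)) (c - e) (c + e) (B * PI / 2).
Proof.
  intros He.
  set (F := fun t => A / 2 * ln ((t - c) ^ 2 + e ^ 2) + B * atan ((t - c) / e)).
  replace (B * PI / 2) with (minus (F (c + e)) (F (c - e))).
  2:{ unfold F, minus, plus, opp; simpl.
      replace (c + e - c) with e by ring. replace (c - e - c) with (- e) by ring.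
      replace ((- e) ^ 2) with (e ^ 2) by ring.
      replace (e / e) with 1 by (field; lra). replace (- e / e) with (- 1) by (field; lra).
      replace (- e * (- e * 1) + e * (e * 1)) with (e * (e * 1) + e * (e * 1)) by ring.
      replace (atan (-1)) with (- atan 1) by (rewrite <- atan_opp; f_equal; lra).
      rewrite atan_1. field. }
  apply (is_RInt_derive (V:=R_CompleteNormedModule)).
  - intros t Ht. unfold F. auto_derive.
    + assert (0 < e * (e * 1)) by nra. pose proof (Rle_0_sqr (t + - c)). unfold Rsqr in *. nra.
    + replace (t - c) with (t + - c) by ring. set (u := t + - c).
      assert (0 < e * e) by nra. pose proof (Rle_0_sqr u). unfold Rsqr in *.
      assert (Hd : 0 < u * (u * 1) + e * (e * 1)) by nra.
      assert (Hd2 : 0 < u ^ 2 + e ^ 2) by (simpl; nra).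
      assert (Hd3 : 1 + u * / e * (u * / e * 1) = (u * (u * 1) + e * (e * 1)) / (e * e)) by (field; lra).
      rewrite Hd3. field. repeat split; lra.
  - intros t Ht. apply (ex_derive_continuous (K:=R_AbsRing) (V:=R_NormedModule)). auto_derive.
    assert (0 < e * (e * 1)) by nra. pose proof (Rle_0_sqr (t + - c)). unfold Rsqr in *. nra.
Qed.

Lemma Rabs_div_le N D e eta : 0 < e -> e * e <= D -> Rabs N <= 2 * e * eta ->
  Rabs (N / D) <= 2 * eta / e.
Proof.
  intros He HD HN. assert (0 < D) by nra. assert (0 <= eta) by (pose proof (Rabs_pos N); nra).
  rewrite Rabs_div, (Rabs_pos_eq D) by lra.
  apply (Rmult_le_reg_r D); [lra|]. unfold Rdiv. rewrite Rmult_assoc, Rinv_l, Rmult_1_r by lra.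
  assert (2 * eta * / e * (e * e) <= 2 * eta * / e * D).
  { apply Rmult_le_compat_l; [|exact HD].
    assert (0 < / e) by (apply Rinv_0_lt_compat; lra). nra. }
  replace (2 * eta * / e * (e * e)) with (2 * e * eta) in H1 by (field; lra). lra.
Qed.

Lemma RInt_edge_estimate (g fa fb : R -> R) A B s c e eta : 0 < e -> (s = 1 \/ s = -1) ->
  ex_RInt g (c - e) (c + e) ->
  (forall t, c - e <= t <= c + e -> g t = ((t - c) * fa t + s * e * fb t) / ((t - c) ^ 2 + e ^ 2)) ->
  (forall t, c - e <= t <= c + e -> Rabs (fa t - A) <= eta /\ Rabs (fb t - B) <= eta) ->
  Rabs (RInt g (c - e) (c + e) - s * B * PI / 2) <= 4 * eta.
Proof.
  intros He Hs Hex Hg Hb.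
  set (m := fun t => (A * (t - c) + (s * B) * e) / ((t - c) ^ 2 + e ^ 2)).
  assert (Hm : is_RInt m (c - e) (c + e) (s * B * PI / 2)) by (apply is_RInt_edge_kernel; auto).
  rewrite <- (is_RInt_unique m _ _ _ Hm).
  assert (Hm' : ex_RInt m (c - e) (c + e)) by (eexists; exact Hm).
  change (RInt g (c - e) (c + e) - RInt m (c - e) (c + e))
    with (minus (RInt g (c - e) (c + e)) (RInt m (c - e) (c + e))).
  rewrite <- (RInt_minus g m) by assumption.
  replace (4 * eta) with ((c + e - (c - e)) * (2 * eta / e)) by (field; lra).
  apply abs_RInt_le_const; [lra | apply (ex_RInt_minus (V:=R_NormedModule)); auto |].
  intros t Ht. rewrite Hg by exact Ht. unfold m.
  change (minus ?x ?y) with (x - y). change (norm ?x) with (Rabs x).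
  assert (Hpos : e * e <= (t - c) ^ 2 + e ^ 2) by (pose proof (pow2_ge_0 (t - c)); simpl; nra).
  replace (((t - c) * fa t + s * e * fb t) / ((t - c) ^ 2 + e ^ 2) -
           (A * (t - c) + s * B * e) / ((t - c) ^ 2 + e ^ 2))
    with (((t - c) * (fa t - A) + s * e * (fb t - B)) / ((t - c) ^ 2 + e ^ 2))
    by (field; nra).
  apply Rabs_div_le; [exact He | exact Hpos |].
  destruct (Hb t Ht) as [B1 B2].
  eapply Rle_trans; [apply Rabs_triang|]. rewrite !Rabs_mult.
  assert (Rabs (t - c) <= e) by (apply Rabs_le; lra).
  assert (Rabs s = 1) by (destruct Hs as [-> | ->]; [apply Rabs_R1 | rewrite Rabs_left; lra]).
  rewrite (Rabs_pos_eq e) by lra.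
  pose proof (Rabs_pos (fa t - A)). pose proof (Rabs_pos (t - c)). pose proof (Rabs_pos (fb t - B)).
  nra.
Qed.

Lemma Rabs_le_all_eq0 z : (forall eps, 0 < eps -> Rabs z <= eps) -> z = 0.
Proof.
  intros H. destruct (Req_dec z 0) as [E|E]; [exact E|].
  assert (0 < Rabs z) by (apply Rabs_pos_lt, E).
  specialize (H (Rabs z / 2) ltac:(lra)). lra.
Qed.

(* Each side contributes [l1 pi / 2] up to [4 eta]. *)
Lemma circulation_square_estimate (P Q f1 f3 : Pt -> R) p q l1 l3 e eta : 0 < e ->
  pole_form P Q f1 f3 p q ->
  (forall x y, p - e <= x <= p + e -> q - e <= y <= q + e ->
     (x = p - e \/ x = p + e \/ y = q - e \/ y = q + e) ->
     continuous P (x, y) /\ continuous Q (x, y) /\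
     Rabs (f3 (x, y) - l3) <= eta /\ Rabs (f1 (x, y) - l1) <= eta) ->
  Rabs (circulation P Q (p - e) (p + e) (q - e) (q + e) - 2 * PI * l1) <= 16 * eta.
Proof.
  intros He Hform Hbd.
  assert (Hne : forall x y, (x = p - e \/ x = p + e \/ y = q - e \/ y = q + e) -> (x, y) <> (p, q))
    by (intros x y Hxy E; injection E as -> ->; lra).
  assert (HP : forall x y, p - e <= x <= p + e -> q - e <= y <= q + e ->
                 (x = p - e \/ x = p + e \/ y = q - e \/ y = q + e) -> continuous P (x, y))
    by (intros x y Hx Hy Hxy; destruct (Hbd x y Hx Hy Hxy) as (H & _); exact H).
  assert (HQ : forall x y, p - e <= x <= p + e -> q - e <= y <= q + e ->
                 (x = p - e \/ x = p + e \/ y = q - e \/ y = q + e) -> continuous Q (x, y))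
    by (intros x y Hx Hy Hxy; destruct (Hbd x y Hx Hy Hxy) as (_ & H & _); exact H).
  assert (Hclose : forall x y, p - e <= x <= p + e -> q - e <= y <= q + e ->
     (x = p - e \/ x = p + e \/ y = q - e \/ y = q + e) ->
     Rabs (f3 (x, y) - l3) <= eta /\ Rabs (f1 (x, y) - l1) <= eta)
    by (intros x y Hx Hy Hxy; destruct (Hbd x y Hx Hy Hxy) as (_ & _ & H); exact H).
  assert (Hrng : forall t c, Rmin (c - e) (c + e) <= t <= Rmax (c - e) (c + e) -> c - e <= t <= c + e).
  { intros t c Ht. unfold Rmin, Rmax in Ht. destruct (Rle_dec (c - e) (c + e)); lra. }
  assert (Hbot : Rabs (int_x P (q - e) (p - e) (p + e) - 1 * l1 * PI / 2) <= 4 * eta).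
  { apply (RInt_edge_estimate _ (fun x => f3 (x, q - e)) (fun x => f1 (x, q - e)) l3); auto.
    - apply ex_RInt_fst. intros t Ht. apply HP; [apply Hrng|..]; auto; lra.
    - intros t Ht. rewrite (proj1 (Hform t (q - e) (Hne t (q - e) ltac:(lra)))).
      f_equal; ring.
    - intros t Ht. apply (Hclose t (q - e)); auto; lra. }
  assert (Htop : Rabs (int_x P (q + e) (p - e) (p + e) - (-1) * l1 * PI / 2) <= 4 * eta).
  { apply (RInt_edge_estimate _ (fun x => f3 (x, q + e)) (fun x => f1 (x, q + e)) l3); auto.
    - apply ex_RInt_fst. intros t Ht. apply HP; [apply Hrng|..]; auto; lra.
    - intros t Ht. rewrite (proj1 (Hform t (q + e) (Hne t (q + e) ltac:(lra)))).
      f_equal; ring.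
    - intros t Ht. apply (Hclose t (q + e)); auto; lra. }
  assert (Hright : Rabs (int_y Q (p + e) (q - e) (q + e) - 1 * l1 * PI / 2) <= 4 * eta).
  { apply (RInt_edge_estimate _ (fun y => f3 (p + e, y)) (fun y => f1 (p + e, y)) l3); auto.
    - apply ex_RInt_snd. intros t Ht. apply HQ; [|apply Hrng|]; auto; lra.
    - intros t Ht. rewrite (proj2 (Hform (p + e) t (Hne (p + e) t ltac:(lra)))).
      f_equal; ring.
    - intros t Ht. apply (Hclose (p + e) t); auto; lra. }
  assert (Hleft : Rabs (int_y Q (p - e) (q - e) (q + e) - (-1) * l1 * PI / 2) <= 4 * eta).
  { apply (RInt_edge_estimate _ (fun y => f3 (p - e, y)) (fun y => f1 (p - e, y)) l3); auto.
    - apply ex_RInt_snd. intros t Ht. apply HQ; [|apply Hrng|]; auto; lra.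
    - intros t Ht. rewrite (proj2 (Hform (p - e) t (Hne (p - e) t ltac:(lra)))).
      f_equal; ring.
    - intros t Ht. apply (Hclose (p - e) t); auto; lra. }
  unfold circulation. apply Rabs_le. apply Rabs_le_between in Hbot, Htop, Hright, Hleft.
  split; lra.
Qed.

Lemma circulation_small_square (P Q f1 f3 : Pt -> R) p q l1 l3 K e0 : 0 < e0 ->
  pole_form P Q f1 f3 p q ->
  filterlim f1 (punctured (p, q)) (locally l1) -> filterlim f3 (punctured (p, q)) (locally l3) ->
  (forall x y, (x, y) <> (p, q) -> Rabs (x - p) < e0 -> Rabs (y - q) < e0 ->
     continuous P (x, y) /\ continuous Q (x, y)) ->
  (forall e, 0 < e < e0 -> circulation P Q (p - e) (p + e) (q - e) (q + e) = K) ->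
  K = 2 * PI * l1.
Proof.
  intros He0 Hform T1 T3 Hc HK.
  apply Rminus_diag_uniq, Rabs_le_all_eq0. intros eps Heps. set (eta := eps / 16).
  assert (Heta : 0 < eta) by (unfold eta; lra).
  assert (Hnear : punctured (p, q) (fun z => Rabs (f1 z - l1) < eta /\ Rabs (f3 z - l3) < eta)).
  { apply filter_and;
      [apply (T1 (fun r => Rabs (r - l1) < eta)) | apply (T3 (fun r => Rabs (r - l3) < eta))];
      exists (mkposreal eta Heta); intros r Hr; exact Hr. }
  destruct (punctured_box p q _ Hnear) as [dl [Hdl Hbox]].
  pose proof (Rmin_pos e0 dl He0 Hdl). pose proof (Rmin_l e0 dl). pose proof (Rmin_r e0 dl).
  set (e := Rmin e0 dl / 2) in *.
  assert (He : 0 < e) by (unfold e; lra).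
  rewrite <- (HK e) by (unfold e; lra).
  replace eps with (16 * eta) by (unfold eta; lra).
  apply (circulation_square_estimate P Q f1 f3 p q l1 l3); [exact He | exact Hform |].
  intros x y Hx Hy Hxy.
  assert (Hne : (x, y) <> (p, q)) by (intros E; injection E as -> ->; lra).
  assert (Hx' : Rabs (x - p) < Rmin e0 dl) by (apply Rabs_def1; unfold e in *; lra).
  assert (Hy' : Rabs (y - q) < Rmin e0 dl) by (apply Rabs_def1; unfold e in *; lra).
  destruct (Hc x y Hne) as [HPc HQc]; try lra.
  destruct (Hbox x y Hne) as [B1 B3]; try lra.
  repeat split; (assumption || lra).
Qed.

Lemma circulation_pole (P Q f1 f3 : Pt -> R) p q l1 l3 a b c d delta :
  a < p < b -> c < q < d -> 0 < delta ->
  (forall x y, a - delta < x < b + delta -> c - delta < y < d + delta -> (x, y) <> (p, q) ->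
     closed_at P Q (x, y)) ->
  pole_form P Q f1 f3 p q ->
  filterlim f1 (punctured (p, q)) (locally l1) -> filterlim f3 (punctured (p, q)) (locally l3) ->
  circulation P Q a b c d = 2 * PI * l1.
Proof.
  intros Hp Hq Hd HPQ Hform T1 T3.
  set (e0 := Rmin (Rmin (p - a) (b - p)) (Rmin (q - c) (d - q))).
  assert (He0 : 0 < e0) by (unfold e0; repeat apply Rmin_pos; lra).
  pose proof (Rmin_l (Rmin (p - a) (b - p)) (Rmin (q - c) (d - q))).
  pose proof (Rmin_r (Rmin (p - a) (b - p)) (Rmin (q - c) (d - q))).
  pose proof (Rmin_l (p - a) (b - p)). pose proof (Rmin_r (p - a) (b - p)).
  pose proof (Rmin_l (q - c) (d - q)). pose proof (Rmin_r (q - c) (d - q)).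
  fold e0 in H, H0.
  apply (circulation_small_square P Q f1 f3 p q l1 l3 _ e0); auto.
  - intros x y Hne Hx Hy. apply Rabs_def2 in Hx, Hy.
    destruct (HPQ x y) as [HP [HQ _]]; try lra; auto.
    split; apply C1_at_continuous; assumption.
  - intros e He. symmetry. apply (circulation_excise P Q a b c d p q e delta); auto; lra.
Qed.

Section TwoPoles.
Variables (P Q fa1 fa3 fb1 fb3 : Pt -> R) (pa qa pb qb la1 la3 lb1 lb3 L : R).
Hypotheses
  (HPQ : forall z, z <> (pa, qa) -> z <> (pb, qb) -> closed_at P Q z)
  (Ha : pole_form P Q fa1 fa3 pa qa)
  (Ta1 : filterlim fa1 (punctured (pa, qa)) (locally la1))
  (Ta3 : filterlim fa3 (punctured (pa, qa)) (locally la3))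
  (Hb : pole_form P Q fb1 fb3 pb qb)
  (Tb1 : filterlim fb1 (punctured (pb, qb)) (locally lb1))
  (Tb3 : filterlim fb3 (punctured (pb, qb)) (locally lb3))
  (Hpa : Rabs pa < L) (Hqa : Rabs qa < L) (Hpb : Rabs pb < L) (Hqb : Rabs qb < L).

Lemma circulation_two_poles_x : pa < pb ->
  circulation P Q (- L) L (- L) L = 2 * PI * (la1 + lb1).
Proof.
  intros Hab. apply Rabs_def2 in Hpa, Hqa, Hpb, Hqb.
  set (m := (pa + pb) / 2). set (dl := (pb - pa) / 4).
  assert (Hline : forall y x0 x1, (y = - L \/ y = L) -> ex_RInt (fun x => P (x, y)) x0 x1).
  { intros y x0 x1 Hy. apply ex_RInt_fst. intros t _. apply C1_at_continuous, HPQ;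
      intros E; injection E as -> ->; lra. }
  rewrite (circulation_split_x P Q (- L) m L (- L) L) by (apply Hline; auto).
  rewrite Rmult_plus_distr_l. f_equal.
  - apply (circulation_pole P Q fa1 fa3 pa qa la1 la3 _ _ _ _ dl); unfold m, dl in *; try lra; auto.
    intros x y Hx Hy Hn. apply HPQ; auto. intros E; injection E as -> ->; lra.
  - apply (circulation_pole P Q fb1 fb3 pb qb lb1 lb3 _ _ _ _ dl); unfold m, dl in *; try lra; auto.
    intros x y Hx Hy Hn. apply HPQ; auto. intros E; injection E as -> ->; lra.
Qed.

Lemma circulation_two_poles_y : qa < qb ->
  circulation P Q (- L) L (- L) L = 2 * PI * (la1 + lb1).
Proof.
  intros Hab. apply Rabs_def2 in Hpa, Hqa, Hpb, Hqb.
  set (m := (qa + qb) / 2). set (dl := (qb - qa) / 4).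
  assert (Hline : forall x y0 y1, (x = - L \/ x = L) -> ex_RInt (fun y => Q (x, y)) y0 y1).
  { intros x y0 y1 Hx. apply ex_RInt_snd. intros t _. apply C1_at_continuous, HPQ;
      intros E; injection E as -> ->; lra. }
  rewrite (circulation_split_y P Q (- L) L (- L) m L) by (apply Hline; auto).
  rewrite Rmult_plus_distr_l. f_equal.
  - apply (circulation_pole P Q fa1 fa3 pa qa la1 la3 _ _ _ _ dl); unfold m, dl in *; try lra; auto.
    intros x y Hx Hy Hn. apply HPQ; auto. intros E; injection E as -> ->; lra.
  - apply (circulation_pole P Q fb1 fb3 pb qb lb1 lb3 _ _ _ _ dl); unfold m, dl in *; try lra; auto.
    intros x y Hx Hy Hn. apply HPQ; auto. intros E; injection E as -> ->; lra.
Qed.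

End TwoPoles.

Lemma circulation_two_poles (P Q fa1 fa3 fb1 fb3 : Pt -> R) pa qa pb qb la1 la3 lb1 lb3 L :
  (pa, qa) <> (pb, qb) ->
  (forall z, z <> (pa, qa) -> z <> (pb, qb) -> closed_at P Q z) ->
  pole_form P Q fa1 fa3 pa qa ->
  filterlim fa1 (punctured (pa, qa)) (locally la1) -> filterlim fa3 (punctured (pa, qa)) (locally la3) ->
  pole_form P Q fb1 fb3 pb qb ->
  filterlim fb1 (punctured (pb, qb)) (locally lb1) -> filterlim fb3 (punctured (pb, qb)) (locally lb3) ->
  Rabs pa < L -> Rabs qa < L -> Rabs pb < L -> Rabs qb < L ->
  circulation P Q (- L) L (- L) L = 2 * PI * (la1 + lb1).
Proof.
  intros Hne HPQ; intros.
  assert (HQP : forall z, z <> (pb, qb) -> z <> (pa, qa) -> closed_at P Q z) by auto.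
  destruct (Rtotal_order pa pb) as [Hp | [-> | Hp]].
  - apply (circulation_two_poles_x P Q fa1 fa3 fb1 fb3 pa qa pb qb la1 la3 lb1 lb3); auto.
  - destruct (Rtotal_order qa qb) as [Hq | [-> | Hq]]; [| now exfalso; apply Hne |].
    + apply (circulation_two_poles_y P Q fa1 fa3 fb1 fb3 pb qa pb qb la1 la3 lb1 lb3); auto.
    + rewrite Rplus_comm.
      apply (circulation_two_poles_y P Q fb1 fb3 fa1 fa3 pb qb pb qa lb1 lb3 la1 la3); auto.
  - rewrite Rplus_comm.
    apply (circulation_two_poles_x P Q fb1 fb3 fa1 fa3 pb qb pa qa lb1 lb3 la1 la3); auto.
Qed.

Lemma Rabs_le_absj x y : Rabs x <= absj (x, y) /\ Rabs y <= absj (x, y).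
Proof.
  unfold absj; cbn [fst snd]. pose proof (sqrt_plus_sqr x y) as [H _].
  pose proof (Rmax_l (Rabs x) (Rabs y)). pose proof (Rmax_r (Rabs x) (Rabs y)). split; lra.
Qed.

Lemma circulation_square_decay (P Q : Pt -> R) C R0 L : 0 <= C -> 0 < L -> R0 < L ->
  (forall z, R0 < absj z -> Rabs (P z) <= C / absj z ^ 2 /\ Rabs (Q z) <= C / absj z ^ 2) ->
  (forall x y, (Rabs x = L \/ Rabs y = L) -> continuous P (x, y) /\ continuous Q (x, y)) ->
  Rabs (circulation P Q (- L) L (- L) L) <= 8 * C / L.
Proof.
  intros HC HR HR0 Hdecay Hc.
  assert (Hside : forall x y, (Rabs x = L \/ Rabs y = L) ->
                    Rabs (P (x, y)) <= C / L ^ 2 /\ Rabs (Q (x, y)) <= C / L ^ 2).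
  { intros x y Hxy. destruct (Rabs_le_absj x y) as [A1 A2].
    assert (HA : L <= absj (x, y)) by (destruct Hxy; lra).
    assert (C / absj (x, y) ^ 2 <= C / L ^ 2).
    { apply Rmult_le_compat_l; [exact HC|]. apply Rinv_le_contravar; [apply pow_lt; lra|].
      apply pow_incr; lra. }
    destruct (Hdecay (x, y)) as [B1 B2]; [lra|]. split; lra. }
  assert (HRR : Rabs L = L) by (apply Rabs_pos_eq; lra).
  assert (HRR' : Rabs (- L) = L) by (rewrite Rabs_Ropp; auto).
  assert (Hedge : forall g : R -> R, (forall t, - L <= t <= L -> continuous g t) ->
             (forall t, - L <= t <= L -> Rabs (g t) <= C / L ^ 2) ->
             Rabs (RInt g (- L) L) <= 2 * C / L).
  { intros g Hg Hb. replace (2 * C / L) with ((L - - L) * (C / L ^ 2)) by (field; lra).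
    apply abs_RInt_le_const; [lra| |exact Hb].
    apply (ex_RInt_continuous (V:=R_CompleteNormedModule)). intros t Ht. apply Hg.
    unfold Rmin, Rmax in Ht. destruct (Rle_dec (- L) L); lra. }
  assert (E1 : Rabs (int_x P (- L) (- L) L) <= 2 * C / L).
  { apply Hedge; intros t _; [apply continuous_Pt_fst|]; apply Hside || apply Hc; auto. }
  assert (E2 : Rabs (int_x P L (- L) L) <= 2 * C / L).
  { apply Hedge; intros t _; [apply continuous_Pt_fst|]; apply Hside || apply Hc; auto. }
  assert (E3 : Rabs (int_y Q L (- L) L) <= 2 * C / L).
  { apply Hedge; intros t _; [apply continuous_Pt_snd|]; apply Hside || apply Hc; auto. }
  assert (E4 : Rabs (int_y Q (- L) (- L) L) <= 2 * C / L).
  { apply Hedge; intros t _; [apply continuous_Pt_snd|]; apply Hside || apply Hc; auto. }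
  unfold circulation. apply Rabs_le. apply Rabs_le_between in E1, E2, E3, E4. split; lra.
Qed.

Lemma Rabs_le_div_eq0 S K L0 : (forall L, L0 < L -> 0 < L -> Rabs S <= K / L) -> S = 0.
Proof.
  intros H. destruct (Req_dec S 0) as [E|E]; [exact E|].
  assert (HS : 0 < Rabs S) by (apply Rabs_pos_lt, E).
  set (L := Rmax (Rmax L0 0) (2 * Rabs K / Rabs S) + 1).
  pose proof (Rmax_l (Rmax L0 0) (2 * Rabs K / Rabs S)).
  pose proof (Rmax_r (Rmax L0 0) (2 * Rabs K / Rabs S)).
  pose proof (Rmax_l L0 0). pose proof (Rmax_r L0 0).
  assert (HL : 0 < L) by (unfold L; lra).
  specialize (H L ltac:(unfold L; lra) HL).
  assert (HSL : Rabs S * L <= Rabs K).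
  { replace (Rabs K) with (Rabs K / L * L) by (field; lra).
    apply Rmult_le_compat_r; [lra|]. pose proof (Rle_abs K).
    apply (Rle_trans _ _ _ H). apply Rmult_le_compat_r; [|lra].
    left. apply Rinv_0_lt_compat, HL. }
  assert (HKS : 2 * Rabs K / Rabs S * Rabs S = 2 * Rabs K) by (field; lra).
  assert (2 * Rabs K / Rabs S * Rabs S < L * Rabs S)
    by (apply Rmult_lt_compat_r; [|unfold L]; lra).
  pose proof (Rabs_pos K). nra.
Qed.

(* The circulation around [[-L, L]^2] equals [2 pi (la1 + lb1)] and is [O(1/L)]. *)
Theorem residues_cancel (P Q fa1 fa3 fb1 fb3 : Pt -> R) pa qa pb qb la1 la3 lb1 lb3 C R0 :
  (pa, qa) <> (pb, qb) ->
  (forall z, z <> (pa, qa) -> z <> (pb, qb) -> closed_at P Q z) ->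
  pole_form P Q fa1 fa3 pa qa ->
  filterlim fa1 (punctured (pa, qa)) (locally la1) -> filterlim fa3 (punctured (pa, qa)) (locally la3) ->
  pole_form P Q fb1 fb3 pb qb ->
  filterlim fb1 (punctured (pb, qb)) (locally lb1) -> filterlim fb3 (punctured (pb, qb)) (locally lb3) ->
  0 <= C -> (forall z, R0 < absj z -> Rabs (P z) <= C / absj z ^ 2 /\ Rabs (Q z) <= C / absj z ^ 2) ->
  la1 + lb1 = 0.
Proof.
  intros Hne HPQ Ha Ta1 Ta3 Hb Tb1 Tb3 HC Hdecay.
  set (L0 := Rmax (Rmax R0 (Rmax (Rabs pa) (Rabs qa))) (Rmax (Rabs pb) (Rabs qb))).
  assert (HPI : 0 < 2 * PI) by (pose proof PI_RGT_0; lra).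
  enough (H2PI : 2 * PI * (la1 + lb1) = 0) by (apply Rmult_integral in H2PI; lra).
  apply (Rabs_le_div_eq0 _ (8 * C) L0). intros L HL HL0.
  unfold L0 in HL. rewrite !Rmax_Rlt in HL.
  destruct HL as [[HR0 [H1 H2]] [H3 H4]].
  rewrite <- (circulation_two_poles P Q fa1 fa3 fb1 fb3 pa qa pb qb la1 la3 lb1 lb3 L); auto.
  apply circulation_square_decay with R0; auto.
  intros x y Hxy.
  assert (Hoff : (x, y) <> (pa, qa) /\ (x, y) <> (pb, qb))
    by (split; intros E; injection E as -> ->; destruct Hxy; lra).
  destruct (HPQ (x, y)) as [HP [HQ _]]; try tauto.
  split; apply C1_at_continuous; assumption.
Qed.

Lemma Bcoords_ext X Y : c1 X = c1 Y -> c2 X = c2 Y -> c3 X = c3 Y -> c4 X = c4 Y -> X = Y.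
Proof.
  destruct X as [[? ?] [? ?]], Y as [[? ?] [? ?]]. unfold c1, c2, c3, c4; simpl.
  intros; subst; reflexivity.
Qed.

Lemma c1_Bmul X Y : c1 (Bmul X Y) = c1 X * c1 Y - c2 X * c2 Y - (c3 X * c3 Y - c4 X * c4 Y).
Proof. destruct X as [[? ?] [? ?]], Y as [[? ?] [? ?]]. unfold c1, c2, c3, c4, Bmul; simpl. ring. Qed.
Lemma c2_Bmul X Y : c2 (Bmul X Y) = c1 X * c2 Y + c2 X * c1 Y - (c3 X * c4 Y + c4 X * c3 Y).
Proof. destruct X as [[? ?] [? ?]], Y as [[? ?] [? ?]]. unfold c1, c2, c3, c4, Bmul; simpl. ring. Qed.
Lemma c3_Bmul X Y : c3 (Bmul X Y) = c1 X * c3 Y - c2 X * c4 Y + (c3 X * c1 Y - c4 X * c2 Y).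
Proof. destruct X as [[? ?] [? ?]], Y as [[? ?] [? ?]]. unfold c1, c2, c3, c4, Bmul; simpl. ring. Qed.
Lemma c4_Bmul X Y : c4 (Bmul X Y) = c1 X * c4 Y + c2 X * c3 Y + (c3 X * c2 Y + c4 X * c1 Y).
Proof. destruct X as [[? ?] [? ?]], Y as [[? ?] [? ?]]. unfold c1, c2, c3, c4, Bmul; simpl. ring. Qed.

Ltac Bcoords_ring :=
  apply Bcoords_ext; rewrite ?c1_Bmul, ?c2_Bmul, ?c3_Bmul, ?c4_Bmul;
  rewrite ?c1_Bmul, ?c2_Bmul, ?c3_Bmul, ?c4_Bmul; ring.

Lemma Bmul_assoc X Y Z : Bmul X (Bmul Y Z) = Bmul (Bmul X Y) Z.
Proof. Bcoords_ring. Qed.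
Lemma Bmul_comm X Y : Bmul X Y = Bmul Y X.
Proof. Bcoords_ring. Qed.

Lemma Cmod_Sc_le_Bnorm X : Cmod (Sc X) <= Bnorm X.
Proof.
  destruct X as [u v]. unfold Bnorm; simpl.
  replace u with (Cmult (RtoC (/ 2)) (Cplus (Cminus u (Cmult Ci v)) (Cplus u (Cmult Ci v)))) at 1
    by (apply injective_projections; simpl; field).
  rewrite Cmod_mult, Cmod_R, Rabs_pos_eq by lra.
  pose proof (Cmod_triangle (Cminus u (Cmult Ci v)) (Cplus u (Cmult Ci v))). lra.
Qed.

Lemma Cmod_Vec_le_Bnorm X : Cmod (Vec X) <= Bnorm X.
Proof.
  destruct X as [u v]. unfold Bnorm; simpl.
  replace v with (Cmult (Cmult Ci (RtoC (/ 2))) (Cminus (Cminus u (Cmult Ci v)) (Cplus u (Cmult Ci v))))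
    at 1 by (apply injective_projections; simpl; field).
  rewrite Cmod_mult, Cmod_mult, Cmod_Ci, Cmod_R, Rabs_pos_eq by lra.
  pose proof (Cmod_triangle (Cminus u (Cmult Ci v)) (Copp (Cplus u (Cmult Ci v)))).
  rewrite Cmod_opp in H. unfold Cminus at 1. lra.
Qed.

Lemma Rabs_coords_le_Bnorm X :
  Rabs (c1 X) <= Bnorm X /\ Rabs (c2 X) <= Bnorm X /\ Rabs (c3 X) <= Bnorm X /\ Rabs (c4 X) <= Bnorm X.
Proof.
  pose proof (Cmod_Sc_le_Bnorm X). pose proof (Cmod_Vec_le_Bnorm X).
  pose proof (Rmax_Cmod (Sc X)). pose proof (Rmax_Cmod (Vec X)).
  pose proof (Rmax_l (Rabs (fst (Sc X))) (Rabs (snd (Sc X)))).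
  pose proof (Rmax_r (Rabs (fst (Sc X))) (Rabs (snd (Sc X)))).
  pose proof (Rmax_l (Rabs (fst (Vec X))) (Rabs (snd (Vec X)))).
  pose proof (Rmax_r (Rabs (fst (Vec X))) (Rabs (snd (Vec X)))).
  unfold c1, c2, c3, c4. repeat split; lra.
Qed.

Lemma Rabs_coord_le_Bnorm X : forall c, List.In c coords -> Rabs (c X) <= Bnorm X.
Proof.
  intros c Hc. destruct (Rabs_coords_le_Bnorm X) as [? [? [? ?]]].
  simpl in Hc. destruct Hc as [<-|[<-|[<-|[<-|[]]]]]; assumption.
Qed.

Lemma Rabs_coords_Bmul_le X Y : forall c, List.In c coords ->
  Rabs (c (Bmul X Y)) <= 4 * (Bnorm X * Bnorm Y).
Proof.
  destruct (Rabs_coords_le_Bnorm X) as [X1 [X2 [X3 X4]]].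
  destruct (Rabs_coords_le_Bnorm Y) as [Y1 [Y2 [Y3 Y4]]].
  assert (Hm : forall u v, Rabs u <= Bnorm X -> Rabs v <= Bnorm Y -> Rabs (u * v) <= Bnorm X * Bnorm Y).
  { intros u v Hu Hv. rewrite Rabs_mult. apply Rmult_le_compat; auto; apply Rabs_pos. }
  assert (H4 : forall s1 s2 s3 s4 t1 t2 t3 t4, Rabs s1 <= Bnorm X -> Rabs s2 <= Bnorm X ->
                 Rabs s3 <= Bnorm X -> Rabs s4 <= Bnorm X -> Rabs t1 <= Bnorm Y ->
                 Rabs t2 <= Bnorm Y -> Rabs t3 <= Bnorm Y -> Rabs t4 <= Bnorm Y ->
                 forall e2 e3 e4 : R, Rabs e2 = 1 -> Rabs e3 = 1 -> Rabs e4 = 1 ->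
                 Rabs (s1 * t1 + e2 * (s2 * t2) + e3 * (s3 * t3) + e4 * (s4 * t4))
                   <= 4 * (Bnorm X * Bnorm Y)).
  { intros s1 s2 s3 s4 t1 t2 t3 t4 A1 A2 A3 A4 B1 B2 B3 B4 e2 e3 e4 E2 E3 E4.
    pose proof (Hm _ _ A1 B1). pose proof (Hm _ _ A2 B2).
    pose proof (Hm _ _ A3 B3). pose proof (Hm _ _ A4 B4).
    pose proof (Rabs_triang (s1 * t1 + e2 * (s2 * t2) + e3 * (s3 * t3)) (e4 * (s4 * t4))).
    pose proof (Rabs_triang (s1 * t1 + e2 * (s2 * t2)) (e3 * (s3 * t3))).
    pose proof (Rabs_triang (s1 * t1) (e2 * (s2 * t2))).
    assert (Hu : forall e u, Rabs e = 1 -> Rabs (e * u) = Rabs u)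
      by (intros e u He; rewrite Rabs_mult, He; ring).
    rewrite (Hu e2 _ E2), (Hu e3 _ E3), (Hu e4 _ E4) in *. lra. }
  assert (P1 : Rabs 1 = 1) by apply Rabs_R1.
  assert (N1 : Rabs (-1) = 1) by (rewrite Rabs_left; lra).
  intros c Hc. simpl in Hc. destruct Hc as [<-|[<-|[<-|[<-|[]]]]].
  - rewrite c1_Bmul.
    replace (c1 X * c1 Y - c2 X * c2 Y - (c3 X * c3 Y - c4 X * c4 Y)) with
      (c1 X * c1 Y + (-1) * (c2 X * c2 Y) + (-1) * (c3 X * c3 Y) + 1 * (c4 X * c4 Y)) by ring.
    apply H4; auto.
  - rewrite c2_Bmul.
    replace (c1 X * c2 Y + c2 X * c1 Y - (c3 X * c4 Y + c4 X * c3 Y)) with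
      (c1 X * c2 Y + 1 * (c2 X * c1 Y) + (-1) * (c3 X * c4 Y) + (-1) * (c4 X * c3 Y)) by ring.
    apply H4; auto.
  - rewrite c3_Bmul.
    replace (c1 X * c3 Y - c2 X * c4 Y + (c3 X * c1 Y - c4 X * c2 Y)) with
      (c1 X * c3 Y + (-1) * (c2 X * c4 Y) + 1 * (c3 X * c1 Y) + (-1) * (c4 X * c2 Y)) by ring.
    apply H4; auto.
  - rewrite c4_Bmul.
    replace (c1 X * c4 Y + c2 X * c3 Y + (c3 X * c2 Y + c4 X * c1 Y)) with
      (c1 X * c4 Y + 1 * (c2 X * c3 Y) + 1 * (c3 X * c2 Y) + 1 * (c4 X * c1 Y)) by ring.
    apply H4; auto.
Qed.

Section RealLimits.
Context {T : Type} (F : (T -> Prop) -> Prop) {FF : Filter F}.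
Variables (f g : T -> R) (lf lg : R).
Hypotheses (Hf : filterlim f F (locally lf)) (Hg : filterlim g F (locally lg)).

Lemma filterlim_Rplus : filterlim (fun z => f z + g z) F (locally (lf + lg)).
Proof. eapply filterlim_comp_2; [exact Hf | exact Hg | apply (filterlim_plus (V:=R_NormedModule))]. Qed.

Lemma filterlim_Rminus : filterlim (fun z => f z - g z) F (locally (lf - lg)).
Proof.
  apply (filterlim_comp_2 (G:=locally lf) (H:=locally (opp lg)) f (fun z => opp (g z)) plus);
    [exact Hf | |].
  - apply (filterlim_comp _ _ _ g opp F (locally lg)); [exact Hg | apply (filterlim_opp (V:=R_NormedModule))].
  - apply (filterlim_plus (V:=R_NormedModule)).
Qed.

Lemma filterlim_Rmult : filterlim (fun z => f z * g z) F (locally (lf * lg)).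
Proof. eapply filterlim_comp_2; [exact Hf | exact Hg | apply (filterlim_mult (K:=R_AbsRing))]. Qed.

End RealLimits.

Definition Blim {T : Type} (F : (T -> Prop) -> Prop) (W : T -> B) (L : B) : Prop :=
  forall c, List.In c coords -> filterlim (fun z => c (W z)) F (locally (c L)).

Lemma Blim_Bmul {T : Type} (F : (T -> Prop) -> Prop) {FF : Filter F} (W V : T -> B) L M :
  Blim F W L -> Blim F V M -> Blim F (fun z => Bmul (W z) (V z)) (Bmul L M).
Proof.
  intros HW HV.
  assert (H : forall c, List.In c coords -> filterlim (fun z => c (W z)) F (locally (c L)) /\
                                           filterlim (fun z => c (V z)) F (locally (c M)))
    by (intros c Hc; split; [apply HW | apply HV]; exact Hc).
  destruct (H c1) as [W1 V1]; [simpl; tauto|]. destruct (H c2) as [W2 V2]; [simpl; tauto|].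
  destruct (H c3) as [W3 V3]; [simpl; tauto|]. destruct (H c4) as [W4 V4]; [simpl; tauto|].
  intros c Hc. simpl in Hc. destruct Hc as [<-|[<-|[<-|[<-|[]]]]];
    [ rewrite c1_Bmul; eapply filterlim_ext; [intros z; rewrite (c1_Bmul (W z) (V z)); reflexivity|]
    | rewrite c2_Bmul; eapply filterlim_ext; [intros z; rewrite (c2_Bmul (W z) (V z)); reflexivity|]
    | rewrite c3_Bmul; eapply filterlim_ext; [intros z; rewrite (c3_Bmul (W z) (V z)); reflexivity|]
    | rewrite c4_Bmul; eapply filterlim_ext; [intros z; rewrite (c4_Bmul (W z) (V z)); reflexivity|] ];
    repeat match goal with
    | |- filterlim (fun _ => _ - _) _ _ => apply filterlim_Rminus
    | |- filterlim (fun _ => _ + _) _ _ => apply filterlim_Rplus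
    | |- filterlim (fun _ => _ * _) _ _ => apply filterlim_Rmult
    end; assumption.
Qed.

Lemma distj_lt_box x y p q d :
  Rabs (x - p) < d / 2 -> Rabs (y - q) < d / 2 -> distj (x, y) (p, q) < d.
Proof.
  intros Hx Hy. unfold distj, absj; simpl.
  assert (0 < d) by (pose proof (Rabs_pos (x - p)); lra).
  rewrite <- (sqrt_pow2 d) by lra. apply sqrt_lt_1_alt. split.
  - pose proof (pow2_ge_0 (x - p)). pose proof (pow2_ge_0 (y - q)). lra.
  - apply Rabs_def2 in Hx, Hy. simpl. nra.
Qed.

Lemma coords_Bsub X Y : forall c, List.In c coords -> c (Bsub X Y) = c X - c Y.
Proof.
  intros c Hc. simpl in Hc. destruct X as [[? ?] [? ?]], Y as [[? ?] [? ?]].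
  destruct Hc as [<-|[<-|[<-|[<-|[]]]]]; unfold Bsub, Badd, Bopp, c1, c2, c3, c4; simpl; ring.
Qed.

Lemma Blim_at_punctured W z0 L : Blim_at W z0 L -> Blim (punctured z0) W L.
Proof.
  destruct z0 as [p q]. intros H c Hc. apply filterlim_locally. intros eps.
  destruct (H eps (cond_pos eps)) as [d [Hd Hball]].
  apply locally_Pt_iff. exists (d / 2). split; [lra|]. intros x y Hx Hy Hne.
  change (Rabs (c (W (x, y)) - c L) < eps). rewrite <- coords_Bsub by exact Hc.
  eapply Rle_lt_trans; [apply Rabs_coord_le_Bnorm, Hc|].
  apply Hball; [exact Hne | apply distj_lt_box; assumption].
Qed.

Definition C1B_at (W : Pt -> B) (p : Pt) : Prop :=
  forall c, List.In c coords -> C1_at (fun q => c (W q)) p.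

Lemma Blim_C1B_at W p : C1B_at W p -> Blim (punctured p) W (W p).
Proof.
  intros H c Hc P HP. apply (C1_at_continuous _ _ (H c Hc)) in HP.
  unfold punctured, within, filtermap. apply (filter_imp (fun z => P (c (W z)))); [auto | exact HP].
Qed.

Lemma locally_neq (z p : Pt) : p <> z -> locally p (fun q => q <> z).
Proof.
  intros H. apply locally_Pt_iff. destruct p as [x0 y0], z as [zx zy]. simpl.
  destruct (Req_dec x0 zx) as [-> | Ex].
  - assert (Ey : y0 <> zy) by (intros ->; apply H; reflexivity).
    exists (Rabs (y0 - zy)). split; [apply Rabs_pos_lt; lra|].
    intros x y _ Hy E. injection E as -> ->. rewrite Rabs_minus_sym in Hy. lra.
  - exists (Rabs (x0 - zx)). split; [apply Rabs_pos_lt; lra|].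
    intros x y Hx _ E. injection E as -> ->. rewrite Rabs_minus_sym in Hx. lra.
Qed.

Lemma C1B_at_of_C1_on (U : Pt -> Prop) W p :
  C1_on U W -> (forall q, U q -> locally q U) -> U p -> C1B_at W p.
Proof.
  intros HC HU Hp c Hc. split; [|split]; [| apply (HC p Hp c Hc) ..].
  apply (filter_imp U); [|apply HU, Hp].
  intros q Hq. destruct (HC q Hq c Hc) as [h1 [h2 _]]. split; assumption.
Qed.

Lemma C1_at_ext f g p : (forall z, f z = g z) -> C1_at f p -> C1_at g p.
Proof. intros H. replace g with f by (apply functional_extensionality, H). trivial. Qed.

Lemma C1B_at_Bmul W V p : C1B_at W p -> C1B_at V p -> C1B_at (fun q => Bmul (W q) (V q)) p.
Proof.
  intros HW HV.
  assert (H : forall c, List.In c coords -> C1_at (fun q => c (W q)) p /\ C1_at (fun q => c (V q)) p)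
    by (intros c Hc; split; [apply HW | apply HV]; exact Hc).
  destruct (H c1) as [W1 V1]; [simpl; tauto|]. destruct (H c2) as [W2 V2]; [simpl; tauto|].
  destruct (H c3) as [W3 V3]; [simpl; tauto|]. destruct (H c4) as [W4 V4]; [simpl; tauto|].
  intros c Hc. simpl in Hc. destruct Hc as [<-|[<-|[<-|[<-|[]]]]];
    [ eapply C1_at_ext; [intros z; rewrite (c1_Bmul (W z) (V z)); reflexivity|]
    | eapply C1_at_ext; [intros z; rewrite (c2_Bmul (W z) (V z)); reflexivity|]
    | eapply C1_at_ext; [intros z; rewrite (c3_Bmul (W z) (V z)); reflexivity|]
    | eapply C1_at_ext; [intros z; rewrite (c4_Bmul (W z) (V z)); reflexivity|] ];
    repeat match goal with
    | |- C1_at (fun _ => _ - _) _ => apply C1_at_minus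
    | |- C1_at (fun _ => _ + _) _ => apply C1_at_plus
    | |- C1_at (fun _ => _ * _) _ => apply C1_at_mult
    end; assumption.
Qed.

Ltac solve_ex_partials :=
  repeat match goal with
  | |- ex_partials (fun _ => _ - _) _ => apply ex_partials_minus
  | |- ex_partials (fun _ => _ + _) _ => apply ex_partials_plus
  | |- ex_partials (fun _ => _ * _) _ => apply ex_partials_mult
  end; assumption.

Ltac expand_partials :=
  repeat match goal with
  | |- context [dx (fun q => @?f q - @?g q) ?p] => rewrite (dx_minus f g p) by solve_ex_partials
  | |- context [dx (fun q => @?f q + @?g q) ?p] => rewrite (dx_plus f g p) by solve_ex_partials
  | |- context [dx (fun q => @?f q * @?g q) ?p] => rewrite (dx_mult f g p) by solve_ex_partials
  | |- context [dy (fun q => @?f q - @?g q) ?p] => rewrite (dy_minus f g p) by solve_ex_partials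
  | |- context [dy (fun q => @?f q + @?g q) ?p] => rewrite (dy_plus f g p) by solve_ex_partials
  | |- context [dy (fun q => @?f q * @?g q) ?p] => rewrite (dy_mult f g p) by solve_ex_partials
  end.

Section ProductRule.
Variables (W V : Pt -> B) (p : Pt).
Hypotheses (HW : C1B_at W p) (HV : C1B_at V p).

Let partials c : List.In c coords ->
  ex_partials (fun q => c (W q)) p /\ ex_partials (fun q => c (V q)) p.
Proof. intros Hc. split; apply C1_at_ex_partials; [apply HW | apply HV]; exact Hc. Qed.

Lemma dxB_Bmul : dxB (fun q => Bmul (W q) (V q)) p = Badd (Bmul (dxB W p) (V p)) (Bmul (W p) (dxB V p)).
Proof.
  destruct (partials c1) as [W1 V1]; [simpl; tauto|]. destruct (partials c2) as [W2 V2]; [simpl; tauto|].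
  destruct (partials c3) as [W3 V3]; [simpl; tauto|]. destruct (partials c4) as [W4 V4]; [simpl; tauto|].
  unfold dxB at 1.
  rewrite (dx_ext (fun q => c1 (Bmul (W q) (V q))) _ p) by (intros z; apply c1_Bmul).
  rewrite (dx_ext (fun q => c2 (Bmul (W q) (V q))) _ p) by (intros z; apply c2_Bmul).
  rewrite (dx_ext (fun q => c3 (Bmul (W q) (V q))) _ p) by (intros z; apply c3_Bmul).
  rewrite (dx_ext (fun q => c4 (Bmul (W q) (V q))) _ p) by (intros z; apply c4_Bmul).
  expand_partials.
  unfold dxB, mkB4, Badd, Bmul, c1, c2, c3, c4; simpl. f_equal; apply injective_projections; simpl; ring.
Qed.

Lemma dyB_Bmul : dyB (fun q => Bmul (W q) (V q)) p = Badd (Bmul (dyB W p) (V p)) (Bmul (W p) (dyB V p)).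
Proof.
  destruct (partials c1) as [W1 V1]; [simpl; tauto|]. destruct (partials c2) as [W2 V2]; [simpl; tauto|].
  destruct (partials c3) as [W3 V3]; [simpl; tauto|]. destruct (partials c4) as [W4 V4]; [simpl; tauto|].
  unfold dyB at 1.
  rewrite (dy_ext (fun q => c1 (Bmul (W q) (V q))) _ p) by (intros z; apply c1_Bmul).
  rewrite (dy_ext (fun q => c2 (Bmul (W q) (V q))) _ p) by (intros z; apply c2_Bmul).
  rewrite (dy_ext (fun q => c3 (Bmul (W q) (V q))) _ p) by (intros z; apply c3_Bmul).
  rewrite (dy_ext (fun q => c4 (Bmul (W q) (V q))) _ p) by (intros z; apply c4_Bmul).
  expand_partials.
  unfold dyB, mkB4, Badd, Bmul, c1, c2, c3, c4; simpl. f_equal; apply injective_projections; simpl; ring.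
Qed.

Lemma dzbar_Bmul :
  dzbar (fun q => Bmul (W q) (V q)) p = Badd (Bmul (dzbar W p) (V p)) (Bmul (W p) (dzbar V p)).
Proof.
  unfold dzbar. rewrite dxB_Bmul, dyB_Bmul.
  destruct (dxB W p) as [[] []], (dyB W p) as [[] []], (dxB V p) as [[] []], (dyB V p) as [[] []],
    (W p) as [[] []], (V p) as [[] []].
  unfold Bscal, Badd, Bmul, Bj; simpl. f_equal; apply injective_projections; simpl; ring.
Qed.

End ProductRule.

(* [(a W + b conj W) V + W (- a V - conj b conj V) = X - conj X] with [X = b conj W V],
   and [X - conj X] has no scalar part. *)
Lemma Sc_Vekua_adjoint_pairing a b W V :
  Sc (Badd (Bmul (Badd (Bmul a W) (Bmul b (Bconj W))) V)
           (Bmul W (Badd (Bmul (Bopp a) V) (Bmul (Bopp (Bconj b)) (Bconj V))))) = RtoC 0.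
Proof.
  destruct a as [[] []], b as [[] []], W as [[] []], V as [[] []].
  cbv [Badd Bmul Bconj Bopp Cplus Cminus Cmult Copp RtoC Sc Vec].
  apply injective_projections; cbn [fst snd]; ring.
Qed.

Lemma closed_forms_of_Sc_dzbar (G : Pt -> B) p : Sc (dzbar G p) = RtoC 0 ->
  dy (fun q => c3 (G q)) p = dx (fun q => c1 (G q)) p /\
  dy (fun q => c4 (G q)) p = dx (fun q => c2 (G q)) p.
Proof.
  intros H. pose proof (f_equal fst H) as H1. pose proof (f_equal snd H) as H2.
  unfold dzbar, dxB, dyB, Bscal, Badd, Bmul, Bj, mkB4 in H1, H2; simpl in H1, H2.
  split; lra.
Qed.

Lemma closed_at_Vekua_adjoint_product (a b W V : Pt -> B) p :
  C1B_at W p -> C1B_at V p ->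
  dzbar W p = Badd (Bmul (a p) (W p)) (Bmul (b p) (Bconj (W p))) ->
  dzbar V p = Badd (Bmul (Bopp (a p)) (V p)) (Bmul (Bopp (Bconj (b p))) (Bconj (V p))) ->
  closed_at (fun q => c3 (Bmul (W q) (V q))) (fun q => c1 (Bmul (W q) (V q))) p /\
  closed_at (fun q => c4 (Bmul (W q) (V q))) (fun q => c2 (Bmul (W q) (V q))) p.
Proof.
  intros HW HV EW EV.
  pose proof (C1B_at_Bmul W V p HW HV) as HG.
  destruct (closed_forms_of_Sc_dzbar (fun q => Bmul (W q) (V q)) p) as [E1 E2].
  { rewrite dzbar_Bmul, EW, EV by assumption. apply Sc_Vekua_adjoint_pairing. }
  split; (split; [|split]); try (apply HG; simpl; tauto); [exact E1 | exact E2].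
Qed.

Lemma pole_form_coords (G : Pt -> B) p q :
  let F z := Bmul (Bsub (toB z) (toB (p, q))) (G z) in
  pole_form (fun z => c3 (G z)) (fun z => c1 (G z)) (fun z => c1 (F z)) (fun z => c3 (F z)) p q /\
  pole_form (fun z => c4 (G z)) (fun z => c2 (G z)) (fun z => c2 (F z)) (fun z => c4 (F z)) p q.
Proof.
  intros F. split; intros x y Hne;
    assert (Hd : (x - p) * (x - p) + (y - q) * (y - q) <> 0)
      by (intros E; apply Hne; pose proof (Rle_0_sqr (x - p)); pose proof (Rle_0_sqr (y - q));
          assert (Ex : Rsqr (x - p) = 0) by (unfold Rsqr in *; lra);
          assert (Ey : Rsqr (y - q) = 0) by (unfold Rsqr in *; lra);
          apply Rsqr_0_uniq in Ex, Ey; f_equal; lra);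
    unfold F; destruct (G (x, y)) as [[g1 g2] [g3 g4]];
    unfold c1, c2, c3, c4, Bmul, Bsub, Badd, Bopp, toB, Cplus, Cminus, Cmult, Copp, RtoC; simpl;
    split; field; exact Hd.
Qed.

Lemma bigO_inv_bound W : bigO_inv W ->
  exists M R0, 0 <= M /\ 0 <= R0 /\ forall z, R0 < absj z -> Bnorm (W z) <= M / absj z.
Proof.
  intros [M [R0 H]]. exists (Rabs M), (Rmax R0 0).
  split; [apply Rabs_pos|]. split; [apply Rmax_r|].
  intros z Hz. pose proof (Rmax_l R0 0). pose proof (Rmax_r R0 0).
  specialize (H z ltac:(lra)).
  apply (Rmult_le_reg_l (absj z)); [lra|]. field_simplify; [|lra].
  pose proof (Rle_abs M). lra.
Qed.

Lemma Bnorm_nonneg X : 0 <= Bnorm X.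
Proof.
  unfold Bnorm. pose proof (Cmod_ge_0 (Cminus (Sc X) (Cmult Ci (Vec X)))).
  pose proof (Cmod_ge_0 (Cplus (Sc X) (Cmult Ci (Vec X)))). lra.
Qed.

Lemma coords_Bmul_decay W V : bigO_inv W -> bigO_inv V ->
  exists C R0, 0 <= C /\ forall z, R0 < absj z ->
    forall c, List.In c coords -> Rabs (c (Bmul (W z) (V z))) <= C / absj z ^ 2.
Proof.
  intros HW HV.
  destruct (bigO_inv_bound W HW) as [M1 [R1 [HM1 [HR1 H1]]]].
  destruct (bigO_inv_bound V HV) as [M2 [R2 [HM2 [HR2 H2]]]].
  exists (4 * (M1 * M2)), (Rmax R1 R2). split; [nra|].
  intros z Hz c Hc. pose proof (Rmax_l R1 R2). pose proof (Rmax_r R1 R2).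
  specialize (H1 z ltac:(lra)). specialize (H2 z ltac:(lra)).
  eapply Rle_trans; [apply Rabs_coords_Bmul_le, Hc|].
  replace (4 * (M1 * M2) / absj z ^ 2) with (4 * ((M1 / absj z) * (M2 / absj z))) by (field; lra).
  apply Rmult_le_compat_l; [lra|].
  apply Rmult_le_compat; auto; apply Bnorm_nonneg.
Qed.

Section Pairing.
Variables (a b W V : Pt -> B) (p0 q0 p1 q1 : R) (A Bv : B).
Hypotheses
  (Hne : (p0, q0) <> (p1, q1))
  (HW : vekua_solution a b (fun z => z <> (p1, q1)) W)
  (HV : vekua_solution (fun p => Bopp (a p)) (fun p => Bopp (Bconj (b p))) (fun z => z <> (p0, q0)) V)
  (LW : Blim_at (fun z => Bmul (Bsub (toB z) (toB (p1, q1))) (W z)) (p1, q1) A)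
  (LV : Blim_at (fun z => Bmul (Bsub (toB z) (toB (p0, q0))) (V z)) (p0, q0) Bv)
  (DW : bigO_inv W) (DV : bigO_inv V).

Let G z := Bmul (W z) (V z).

Let C1B_W z : z <> (p1, q1) -> C1B_at W z.
Proof. apply (C1B_at_of_C1_on _ _ _ (proj1 HW)). intros q; apply locally_neq. Qed.

Let C1B_V z : z <> (p0, q0) -> C1B_at V z.
Proof. apply (C1B_at_of_C1_on _ _ _ (proj1 HV)). intros q; apply locally_neq. Qed.

Let G_closed z : z <> (p0, q0) -> z <> (p1, q1) ->
  closed_at (fun q => c3 (G q)) (fun q => c1 (G q)) z /\
  closed_at (fun q => c4 (G q)) (fun q => c2 (G q)) z.
Proof.
  intros H0 H1. apply (closed_at_Vekua_adjoint_product a b); auto; [apply HW | apply HV]; assumption.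
Qed.

Let G_residue_at_1 :
  Blim (punctured (p1, q1)) (fun z => Bmul (Bsub (toB z) (toB (p1, q1))) (G z)) (Bmul A (V (p1, q1))).
Proof.
  replace (fun z => Bmul (Bsub (toB z) (toB (p1, q1))) (G z))
    with (fun z => Bmul (Bmul (Bsub (toB z) (toB (p1, q1))) (W z)) (V z))
    by (apply functional_extensionality; intros z; unfold G; symmetry; apply Bmul_assoc).
  apply (Blim_Bmul (punctured (p1, q1))); [apply Blim_at_punctured, LW |].
  apply Blim_C1B_at, C1B_V. intros E; apply Hne; auto.
Qed.

Let G_residue_at_0 :
  Blim (punctured (p0, q0)) (fun z => Bmul (Bsub (toB z) (toB (p0, q0))) (G z)) (Bmul (W (p0, q0)) Bv).
Proof.
  replace (fun z => Bmul (Bsub (toB z) (toB (p0, q0))) (G z))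
    with (fun z => Bmul (W z) (Bmul (Bsub (toB z) (toB (p0, q0))) (V z)))
    by (apply functional_extensionality; intros z; unfold G;
        rewrite !Bmul_assoc, (Bmul_comm (W z)); reflexivity).
  apply (Blim_Bmul (punctured (p0, q0))); [| apply Blim_at_punctured, LV].
  apply Blim_C1B_at, C1B_W, Hne.
Qed.

Lemma Sc_residues_cancel : Sc (Badd (Bmul (W (p0, q0)) Bv) (Bmul A (V (p1, q1)))) = RtoC 0.
Proof.
  pose proof (pole_form_coords G p0 q0) as [Form0a Form0b].
  pose proof (pole_form_coords G p1 q1) as [Form1a Form1b].
  destruct (coords_Bmul_decay W V DW DV) as [C [R0 [HC Hdecay]]].
  set (F0 z := Bmul (Bsub (toB z) (toB (p0, q0))) (G z)) in *.
  set (F1 z := Bmul (Bsub (toB z) (toB (p1, q1))) (G z)) in *.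
  set (L0 := Bmul (W (p0, q0)) Bv). set (L1 := Bmul A (V (p1, q1))).
  apply injective_projections; simpl; fold (c1 L0) (c1 L1) (c2 L0) (c2 L1).
  - apply (residues_cancel (fun z => c3 (G z)) (fun z => c1 (G z))
             (fun z => c1 (F0 z)) (fun z => c3 (F0 z)) (fun z => c1 (F1 z)) (fun z => c3 (F1 z))
             p0 q0 p1 q1 (c1 L0) (c3 L0) (c1 L1) (c3 L1) C R0 Hne);
      try (apply G_residue_at_0 || apply G_residue_at_1; simpl; tauto); auto.
    + intros z H0 H1. apply (G_closed z H0 H1).
    + intros z Hz. split; apply Hdecay; simpl; tauto.
  - apply (residues_cancel (fun z => c4 (G z)) (fun z => c2 (G z))
             (fun z => c2 (F0 z)) (fun z => c4 (F0 z)) (fun z => c2 (F1 z)) (fun z => c4 (F1 z))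
             p0 q0 p1 q1 (c2 L0) (c4 L0) (c2 L1) (c4 L1) C R0 Hne);
      try (apply G_residue_at_0 || apply G_residue_at_1; simpl; tauto); auto.
    + intros z H0 H1. apply (G_closed z H0 H1).
    + intros z Hz. split; apply Hdecay; simpl; tauto.
Qed.

End Pairing.

Lemma kernel_relations (X1 Xj Y1 Yj : B) :
  Sc (Badd (Bmul X1 B1) (Bmul B1 Y1)) = RtoC 0 ->
  Sc (Badd (Bmul Xj B1) (Bmul Bj Y1)) = RtoC 0 ->
  Sc (Badd (Bmul X1 Bj) (Bmul B1 Yj)) = RtoC 0 ->
  Sc (Badd (Bmul Xj Bj) (Bmul Bj Yj)) = RtoC 0 ->
  Y1 = Badd (Bopp (mkB (Sc X1) (RtoC 0))) (Bmul Bj (mkB (Sc Xj) (RtoC 0))) /\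
  Yj = Bsub (mkB (Vec X1) (RtoC 0)) (Bmul Bj (mkB (Vec Xj) (RtoC 0))).
Proof.
  destruct X1 as [[] []], Xj as [[] []], Y1 as [[] []], Yj as [[] []].
  unfold Badd, Bsub, Bopp, Bmul, B1, Bj, Cplus, Cminus, Cmult, Copp, RtoC; simpl.
  intros E1 E2 E3 E4.
  apply (f_equal (fun c => (fst c, snd c))) in E1, E2, E3, E4. simpl in E1, E2, E3, E4.
  injection E1 as E1 E1'. injection E2 as E2 E2'. injection E3 as E3 E3'. injection E4 as E4 E4'.
  split; unfold Badd; simpl; f_equal; apply injective_projections; simpl; lra.
Qed.

Theorem mainTheorem4 (a b : Pt -> B) (Z1 Zj Zh1 Zhj : Pt -> Pt -> B) :
  holder_continuous a -> holder_continuous b ->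
  cauchy_kernel a b Z1 Zj ->
  cauchy_kernel (fun p => Bopp (a p)) (fun p => Bopp (Bconj (b p))) Zh1 Zhj ->
  kernel_decay Z1 Zj ->
  kernel_decay Zh1 Zhj ->
  forall z0 z : Pt, z <> z0 ->
    Zh1 z0 z = Badd (Bopp (mkB (Sc (Z1 z z0)) (RtoC 0)))
                    (Bmul Bj (mkB (Sc (Zj z z0)) (RtoC 0))) /\
    Zhj z0 z = Bsub (mkB (Vec (Z1 z z0)) (RtoC 0))
                    (Bmul Bj (mkB (Vec (Zj z z0)) (RtoC 0))).
Proof.
  intros _ _ K Kh D Dh [p0 q0] [p1 q1] Hz.
  assert (Hne : (p0, q0) <> (p1, q1)) by (intros E; apply Hz; auto).
  destruct (K (p1, q1)) as (W1 & Wj & LW1 & LWj).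
  destruct (Kh (p0, q0)) as (V1 & Vj & LV1 & LVj).
  destruct (D (p1, q1)) as [DW1 DWj]. destruct (Dh (p0, q0)) as [DV1 DVj].
  apply kernel_relations; eapply Sc_residues_cancel; eassumption.
Qed.
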